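(* There is an absolute constant $c>0$ such that for every $n,m\ge1$, every sequence $S\in[n]^m$ and every initial BST $T$ on $[n]$, $$\mathbb E_\pi\bigl[\mathrm{MTR}_T(\pi(S))\bigr]\le c\Bigl(\mathit{WS}(S)+m+\sum_{i=1}^n d_T(i)\Bigr),$$ where the expectation is over a uniformly random permutation $\pi$ of $[n]$.
   Context: For $S=(s_1,\dots,s_m)$ and a permutation $\pi$ of $[n]$, let $\pi(S)=(\pi(s_1),\dots,\pi(s_m))$. Move-to-root: each accessed key $x$ is found by searching from the root, at cost equal to the number of nodes on the root-to-$x$ path, i.e. $d(x)+1$ with $d$ the current depth (root at depth $0$). Then $x$ is rotated to the root by single rotations. $\mathrm{MTR}_T(S)$ is the total cost of Move-to-root on $S$ starting from the tree $T$, and $d_T(i)$ is the depth of $i$ in $T$. Working set bound: for $j\le m$, let $\rho(j)=\max\{k<j: s_k=s_j\}$, with $\rho(j)=0$ if there is no such $k$. Let $w_S(j)=\{s_i:\rho(j)<i\le j\}$. Then $\mathit{WS}(S)=\sum_{j=1}^m\log_2|w_S(j)|$. *)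

From Stdlib Require Import Reals.
From HB Require Import structures.
From mathcomp Require Import all_boot all_order all_algebra all_fingroup.
From mathcomp Require Import Rstruct.

Set Implicit Arguments.
Unset Strict Implicit.
Unset Printing Implicit Defensive.

Inductive tree (K : Type) : Type :=
| Leaf : tree K
| Node : tree K -> K -> tree K -> tree K.
Arguments Leaf {K}.

Fixpoint inorder (K : Type) (t : tree K) : seq K :=
  match t with
  | Leaf => [::]
  | Node l k r => inorder l ++ k :: inorder r
  end.

(* A BST on [n] (keys 'I_n, i.e. {0,...,n-1} standing for {1,...,n}):
   its in-order traversal is exactly 0 < 1 < ... < n-1, each key once. *)
Definition is_bst_on (n : nat) (t : tree 'I_n) : Prop :=
  inorder t = enum 'I_n.

Fixpoint depth (n : nat) (x : 'I_n) (t : tree 'I_n) : nat :=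
  match t with
  | Leaf => 0
  | Node l k r =>
      if x == k then 0
      else if (x < k)%N then (depth x l).+1 else (depth x r).+1
  end.

Fixpoint move_to_root (n : nat) (x : 'I_n) (t : tree 'I_n) : tree 'I_n :=
  match t with
  | Leaf => Leaf
  | Node l k r =>
      if x == k then t
      else if (x < k)%N then
        match move_to_root x l with
        | Node a y b => Node a y (Node b k r)
        | Leaf => t
        end
      else
        match move_to_root x r with
        | Node a y b => Node (Node l k a) y b
        | Leaf => t
        end
  end.

Fixpoint MTR (n : nat) (t : tree 'I_n) (s : seq 'I_n) : nat :=
  match s with
  | [::] => 0
  | x :: s' => (depth x t).+1 + MTR (move_to_root x t) s'
  end.

(* Working-set bound, with 1-indexed positions: s_i := onth s i.-1. *)
Definition rho (T : eqType) (s : seq T) (j : nat) : nat :=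
  \max_(1 <= k < j | onth s k.-1 == onth s j.-1) k.

Definition wset_size (T : eqType) (s : seq T) (j : nat) : nat :=
  size (undup [seq onth s i.-1 | i <- index_iota (rho s j).+1 j.+1]).

Local Open Scope ring_scope.

Definition log2 (x : R) : R := (ln x / ln 2)%R.

Definition WS (T : eqType) (s : seq T) : R :=
  (\sum_(1 <= j < (size s).+1) log2 (wset_size s j)%:R).

Definition expected_MTR (n : nat) (t : tree 'I_n) (s : seq 'I_n) : R :=
  ((\sum_(p : 'S_n) (MTR t (map p s))%:R) / (n`!)%:R).

From Stdlib Require Import Reals.
From HB Require Import structures.
From mathcomp Require Import all_boot all_order all_algebra all_fingroup.
From mathcomp Require Import Rstruct zify ring lra.
Import Order.TTheory GRing.Theory Num.Theory.

Set Implicit Arguments.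
Unset Strict Implicit.
Unset Printing Implicit Defensive.

(* Just before x is accessed again, a key y is a proper ancestor of x only if y
   was accessed since the previous access to x and no key accessed after the
   last access to y lies strictly between x and y in key order (before the first
   access to x, ancestors of x in T may remain as well).  Fix those recent
   accesses and a key w among them, and let B be the distinct keys accessed from
   the last access to w on.  Under a uniformly random relabelling p, at most two
   keys of B (the nearest to p x from above and from below) are not separated
   from x by another key of B, and by symmetry every key of B is equally likely
   to be one of them, so w contributes at most 2/|B| to the expected depth.  For
   K distinct recent keys these sizes |B| are 1, ..., K, which gives
   2 H_K <= 2 (1 + ln (K + 1)), and K + 1 is at most the working-set size. *)

Section SearchTrees.
Variable n : nat.
Implicit Types (a k x y z : 'I_n) (l r t A B : tree 'I_n).

Fixpoint search_path x t : seq 'I_n :=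
  if t is Node l k r then
    if x == k then [::] else k :: search_path x (if (x < k)%N then l else r)
  else [::].

Lemma depth_search_path x t : depth x t = size (search_path x t).
Proof. by elim: t => //= l IHl k r IHr; case: eqP => // _; case: ifP; rewrite ?IHl ?IHr. Qed.

Lemma search_path_sub x t : {subset search_path x t <= inorder t}.
Proof.
elim: t => //= l IHl k r IHr y; case: eqP => // _.
rewrite inE mem_cat inE => /predU1P [->|]; first by rewrite eqxx orbT.
by case: ifP => _ Hy; [rewrite (IHl _ Hy) | rewrite (IHr _ Hy) !orbT].
Qed.

Definition bst t := pairwise (fun a b : 'I_n => (a < b)%N) (inorder t).

Lemma bst_Node l k r : bst (Node l k r) ->
  [/\ bst l, bst r, {in inorder l, forall y, y < k}%N & {in inorder r, forall y, k < y}%N].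
Proof.
rewrite /bst /= pairwise_cat pairwise_cons allrel_consr.
by case/and3P=> /andP [/allP ? _] ? /andP [/allP ? ?].
Qed.

Lemma uniq_search_path x t : bst t -> uniq (search_path x t).
Proof.
elim: t => //= l IHl k r IHr /bst_Node [Bl Br Hl Hr].
case: eqP => // _ /=; case: ifP => _; rewrite ?IHl ?IHr // andbT.
- by apply/negP => /search_path_sub /Hl; rewrite ltnn.
- by apply/negP => /search_path_sub /Hr; rewrite ltnn.
Qed.

Lemma inorder_move_to_root a t : inorder (move_to_root a t) = inorder t.
Proof.
elim: t => //= l IHl k r IHr; case: eqP => // _; case: ifP => _.
- by case: (move_to_root a l) IHl => [|A y B] //= <-; rewrite -catA.
- by case: (move_to_root a r) IHr => [|A y B] //= <-; rewrite -catA.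
Qed.

Lemma move_to_root_Node a t : bst t -> a \in inorder t ->
  exists A B, move_to_root a t = Node A a B.
Proof.
elim: t => //= l IHl k r IHr /bst_Node [Bl Br Hl Hr].
rewrite mem_cat inE => Ha; case: eqP => [->|/eqP ak]; first by exists l, r.
rewrite (negbTE ak) /= in Ha; case: ifP => lt_ak.
- have al : a \in inorder l by case/orP: Ha => // /Hr; lia.
  by case: (IHl Bl al) => A [B ->]; exists A, (Node B k r).
- have ar : a \in inorder r by case/orP: Ha => // /Hl; lia.
  by case: (IHr Br ar) => A [B ->]; exists (Node l k A), B.
Qed.

Definition between a x y := ((x < a < y) || (y < a < x))%N.

Lemma between_below a x y : (x < a)%N -> (y < a)%N -> ~~ between a x y.
Proof. by rewrite /between; lia. Qed.

Lemma between_above a x y : (a < x)%N -> (a < y)%N -> ~~ between a x y.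
Proof. by rewrite /between; lia. Qed.

Lemma search_path_rotate_right a k x y l r A B :
  (a < k)%N -> {in inorder r, forall z, k < z}%N -> x != a ->
  (y \in search_path x (Node A a B) ->
     (y == a) || (y \in search_path x l) && ~~ between a x y) ->
  y \in search_path x (Node A a (Node B k r)) ->
  (y == a) || (y \in search_path x (Node l k r)) && ~~ between a x y.
Proof.
move=> lt_ak Hr xa /=; rewrite (negbTE xa) !inE.
case: (ltngtP x a) xa => [lt_xa|lt_ax|/val_inj ->]; rewrite ?eqxx // => _ /= IH.
all: case/predU1P => [->|Hy]; rewrite ?eqxx //.
  move: IH; rewrite Hy orbT => /(_ isT) /predU1P [->|/andP [Hy' nb]].
    by rewrite eqxx.
  have xk : (x < k)%N := ltn_trans lt_xa lt_ak.
  by rewrite (ltn_eqF xk : (x == k) = false) xk inE Hy' orbT nb orbT.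
move: Hy; case: eqP => [//|/eqP xk]; rewrite !inE.
case/predU1P => [->|]; first by rewrite eqxx (between_above lt_ax lt_ak) orbT.
case: ifP => lt_xk Hy.
  move: IH; rewrite Hy orbT => /(_ isT) /predU1P [->|/andP [Hy' nb]].
    by rewrite eqxx.
  by rewrite Hy' orbT nb orbT.
have lt_ky := Hr _ (search_path_sub Hy).
by rewrite Hy orbT (between_above lt_ax (ltn_trans lt_ak lt_ky)) orbT.
Qed.

Lemma search_path_rotate_left a k x y l r A B :
  (k < a)%N -> {in inorder l, forall z, z < k}%N -> x != a ->
  (y \in search_path x (Node A a B) ->
     (y == a) || (y \in search_path x r) && ~~ between a x y) ->
  y \in search_path x (Node (Node l k A) a B) ->
  (y == a) || (y \in search_path x (Node l k r)) && ~~ between a x y.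
Proof.
move=> lt_ka Hl xa /=; rewrite (negbTE xa) !inE.
case: (ltngtP x a) xa => [lt_xa|lt_ax|/val_inj ->]; rewrite ?eqxx // => _ /= IH.
all: case/predU1P => [->|Hy]; rewrite ?eqxx //.
  move: Hy; case: eqP => [//|/eqP xk]; rewrite !inE.
  case/predU1P => [->|]; first by rewrite eqxx (between_below lt_xa lt_ka) orbT.
  case: ifP => lt_xk Hy; last first.
    move: IH; rewrite Hy orbT => /(_ isT) /predU1P [->|/andP [Hy' nb]].
      by rewrite eqxx.
    by rewrite Hy' orbT nb orbT.
  have lt_yk := Hl _ (search_path_sub Hy).
  by rewrite Hy orbT (between_below lt_xa (ltn_trans lt_yk lt_ka)) orbT.
move: IH; rewrite Hy orbT => /(_ isT) /predU1P [->|/andP [Hy' nb]].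
  by rewrite eqxx.
have kx : (k < x)%N := ltn_trans lt_ka lt_ax.
by rewrite (gtn_eqF kx : (x == k) = false) ltnNge (ltnW kx) inE Hy' orbT nb orbT.
Qed.

Lemma search_path_move_to_root a x y t : bst t -> a \in inorder t -> x != a ->
  y \in search_path x (move_to_root a t) ->
  (y == a) || (y \in search_path x t) && ~~ between a x y.
Proof.
elim: t => //= l IHl k r IHr /bst_Node [Bl Br Hl Hr].
rewrite mem_cat inE => Ha xa.
have [eq_ak|ak] := eqVneq a k.
  subst a; rewrite /= (negbTE xa) inE => /predU1P [->|Hy]; first by rewrite eqxx.
  rewrite Hy orbT; apply/orP; right.
  move: Hy; case: ltngtP => [xk|kx|/val_inj xk]; last by rewrite xk eqxx in xa.
    by move/search_path_sub/Hl; apply: between_below.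
  by move/search_path_sub/Hr; apply: between_above.
rewrite (negbTE ak) /= in Ha; move: ak.
case: ltngtP => [lt_ak|lt_ka|/val_inj ->]; rewrite ?eqxx // => _.
- have al : a \in inorder l by case/orP: Ha => // /Hr /(ltn_trans lt_ak); rewrite ltnn.
  have [A [B E]] := move_to_root_Node Bl al.
  rewrite E; apply: (search_path_rotate_right lt_ak Hr xa); rewrite -E; exact: IHl.
- have ar : a \in inorder r by case/orP: Ha => // /Hl /(ltn_trans lt_ka); rewrite ltnn.
  have [A [B E]] := move_to_root_Node Br ar.
  rewrite E; apply: (search_path_rotate_left lt_ka Hl xa); rewrite -E; exact: IHr.
Qed.
End SearchTrees.

Section LastOccurrence.
Variable T : eqType.
Implicit Types (a w x : T) (u : seq T).

(* When w does not occur in u, this is u itself. *)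
Fixpoint from_last w u :=
  if u is a :: u' then if w \in u' then from_last w u' else u else [::].

Lemma from_last_rcons w u a :
  from_last w (rcons u a) = if w == a then [:: a] else rcons (from_last w u) a.
Proof.
elim: u => [|b u IH] /=; first by case: eqP.
by rewrite mem_rcons inE IH; case: eqP => //=; case: ifP.
Qed.

Lemma from_last_sub w u : {subset from_last w u <= u}.
Proof.
by elim: u => //= a u IH y; case: ifP => // _ /IH yu; rewrite inE yu orbT.
Qed.

Lemma mem_from_last w u : w \in u -> w \in from_last w u.
Proof. by elim: u => //= a u IH; case: ifP => // wu _; apply: IH. Qed.

(* When x does not occur in u, this is u itself: every access counts as recent. *)
Fixpoint after_last x u :=
  if u is a :: u' then
    if x \in u' then after_last x u' else if a == x then u' else u
  else [::].

Lemma after_last_notin x u : x \notin after_last x u.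
Proof.
elim: u => //= a u IH; case: ifP => // xu; case: eqP => [_|/eqP ax]; first by rewrite xu.
by rewrite inE negb_or xu eq_sym ax.
Qed.

Lemma after_last_split x u : x \in u -> exists u1, u = u1 ++ x :: after_last x u.
Proof.
elim: u => //= a u IH; rewrite inE; case: ifP => [xu _|_ /orP [/eqP <-|//]].
  by case: (IH xu) => u1 E; exists (a :: u1); rewrite {1}E.
by rewrite eqxx; exists [::].
Qed.

Lemma after_last_id x u : x \notin u -> after_last x u = u.
Proof.
elim: u => //= a u IH; rewrite inE negb_or => /andP [xa xu].
by rewrite (negbTE xu) eq_sym (negbTE xa).
Qed.

Lemma after_last_drop x0 x u : exists q, [/\ (q <= size u)%N, after_last x u = drop q u &
  forall i, (i < size u)%N -> nth x0 u i = x -> (i < q)%N].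
Proof.
have [xu|xu] := boolP (x \in u); last first.
  exists 0%N; split=> // [|i iu xi]; first by rewrite drop0 after_last_id.
  by rewrite -xi mem_nth in xu.
have [u1 E] := after_last_split xu.
exists (size u1).+1; split=> [|| i iu xi].
- by rewrite {1}E size_cat /=; lia.
- by rewrite {2}E -cat_rcons drop_size_cat ?size_rcons.
- rewrite ltnNge; apply: contra (after_last_notin x u) => le_i.
  have lt_i : (i - (size u1).+1 < size (after_last x u))%N.
    by move: iu; rewrite {1}E size_cat /=; lia.
  by rewrite -{1}xi {1}E -cat_rcons nth_cat size_rcons ltnNge le_i /=; apply: mem_nth.
Qed.

Definition since_last_access x0 u j := after_last (nth x0 u j) (take j u).

End LastOccurrence.

Lemma from_last_map (T T' : eqType) (f : T -> T') w u : injective f ->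
  from_last (f w) (map f u) = map f (from_last w u).
Proof. by move=> f_inj; elim: u => //= a u ->; rewrite (mem_map f_inj); case: ifP. Qed.

Lemma after_last_map (T T' : eqType) (f : T -> T') x u : injective f ->
  after_last (f x) (map f u) = map f (after_last x u).
Proof.
move=> f_inj; elim: u => //= a u ->.
by rewrite (mem_map f_inj) (inj_eq f_inj); do 2?case: ifP.
Qed.

Section Runs.
Variable n : nat.
Implicit Types (a x y : 'I_n) (t : tree 'I_n) (u : seq 'I_n).

Definition mtr_run t u := foldl (fun t a => move_to_root a t) t u.

Lemma mtr_run_cat t u1 u2 : mtr_run t (u1 ++ u2) = mtr_run (mtr_run t u1) u2.
Proof. exact: foldl_cat. Qed.

Lemma mtr_run_rcons t u a : mtr_run t (rcons u a) = move_to_root a (mtr_run t u).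
Proof. exact: foldl_rcons. Qed.

Lemma bst_on_bst t : is_bst_on t -> bst t.
Proof.
rewrite /is_bst_on /bst => ->; have := iota_ltn_sorted 0 n.
by rewrite -val_enum_ord (sorted_pairwise ltn_trans) pairwise_map.
Qed.

Lemma is_bst_on_mtr_run t u : is_bst_on t -> is_bst_on (mtr_run t u).
Proof.
by elim: u t => //= a u IH t Bt; apply: IH; rewrite /is_bst_on inorder_move_to_root.
Qed.

Lemma mem_mtr_run t u x : is_bst_on t -> x \in inorder (mtr_run t u).
Proof. by move/(is_bst_on_mtr_run u) ->; rewrite mem_enum. Qed.

Definition visible u x y := (y \in u) && all (fun b => ~~ between b x y) (from_last y u).

Lemma search_path_mtr_run t u x y : is_bst_on t -> x \notin u ->
  y \in search_path x (mtr_run t u) -> (y \in search_path x t) || visible u x y.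
Proof.
move=> Bt; elim/last_ind: u => [|u a IH]; first by move=> _ ->.
rewrite mem_rcons inE negb_or mtr_run_rcons => /andP [xa xu].
have Bu := bst_on_bst (is_bst_on_mtr_run u Bt).
move/(search_path_move_to_root Bu (mem_mtr_run u a Bt) xa).
case/predU1P => [->|/andP [Hy nb]].
  by rewrite /visible mem_rcons mem_head from_last_rcons eqxx /= /between ltnn !andbF orbT.
case/orP: (IH xu Hy) => [->//|/andP [yu Hall]].
apply/orP; right; rewrite /visible mem_rcons inE yu orbT from_last_rcons /=.
by case: eqP => _; rewrite /= ?all_rcons nb ?Hall.
Qed.

Lemma depth_mtr_run t u x : is_bst_on t ->
  (depth x (mtr_run t u) <=
     #|[set y | visible (after_last x u) x y]| + (x \notin u) * depth x t)%N.
Proof.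
move=> Bt; rewrite !depth_search_path cardE.
have uniq_path t' : is_bst_on t' -> uniq (search_path x t').
  by move/bst_on_bst; apply: uniq_search_path.
have [xu|xu] /= := boolP (x \in u).
- have [u1 E] := after_last_split xu.
  rewrite addn0 {1}E mtr_run_cat /=.
  set t1 := move_to_root x (mtr_run t u1).
  have Bt1 : is_bst_on t1 by rewrite /t1 -mtr_run_rcons; apply: is_bst_on_mtr_run.
  have [tl [tr Et1]] :=
    move_to_root_Node (bst_on_bst (is_bst_on_mtr_run u1 Bt)) (mem_mtr_run u1 x Bt).
  apply: uniq_leq_size; first exact: uniq_path (is_bst_on_mtr_run _ Bt1).
  move=> y /(search_path_mtr_run Bt1 (after_last_notin x u)).
  by rewrite /t1 Et1 /= eqxx mem_enum inE.
- rewrite mul1n (after_last_id xu) addnC -size_cat.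
  apply: uniq_leq_size; first exact: uniq_path (is_bst_on_mtr_run _ Bt).
  move=> y /(search_path_mtr_run Bt xu); rewrite mem_cat mem_enum inE.
  by case/orP => ->; rewrite ?orbT.
Qed.
End Runs.

Lemma count_le1_in (T : eqType) (a : pred T) s :
  uniq s -> {in s &, forall x y, a x -> a y -> x = y} -> (count a s <= 1)%N.
Proof.
move=> us a_inj; rewrite -size_filter; case E: (filter a s) => [|x0 r] //.
have x0s : x0 \in filter a s by rewrite E mem_head.
rewrite -E; apply: (@uniq_leq_size _ _ [:: x0]); first exact: filter_uniq.
move=> y; rewrite inE !mem_filter in x0s * => /andP [ay ys]; case/andP: x0s => ax0 x0s.
exact/eqP/a_inj.
Qed.

Section RandomRelabelling.
Variable n : nat.
Implicit Types (b c w x : 'I_n) (B : seq 'I_n) (p : 'S_n).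

Definition unseparated p x B w := all (fun b => ~~ between (p b) (p x) (p w)) B.

Lemma unseparated_inj p x B b c : x \notin B -> b \in B -> c \in B ->
  unseparated p x B b -> unseparated p x B c ->
  (p x < p b)%N = (p x < p c)%N -> b = c.
Proof.
move=> xB bB cB /allP /(_ c cB) Nbc /allP /(_ b bB) Ncb side.
have neq_x d : d \in B -> (p d : nat) != p x.
  by move=> dB; rewrite val_eqE (inj_eq perm_inj); apply: contraNneq xB => <-.
move: (neq_x b bB) (neq_x c cB) Nbc Ncb side; rewrite /between => bx cx Nbc Ncb side.
by apply: (@perm_inj _ p); apply: ord_inj; lia.
Qed.

Lemma count_unseparated p x B : x \notin B -> (count (unseparated p x B) (undup B) <= 2)%N.
Proof.
move=> xB; rewrite -size_filter -(count_predC (fun b => p x < p b)%N).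
have uf : uniq (filter (unseparated p x B) (undup B)) by rewrite filter_uniq ?undup_uniq.
rewrite -[2%N]/(1 + 1)%N; apply: leq_add; apply: count_le1_in uf _ => b c;
  rewrite !mem_filter !mem_undup => /andP [Nb bB] /andP [Nc cB] /= hb hc;
  apply: unseparated_inj xB bB cB Nb Nc _.
- by rewrite hb hc.
- by rewrite (negbTE hb) (negbTE hc).
Qed.

Lemma sum_unseparated_eq x B b w : b \in B -> w \in B -> x \notin B ->
  (\sum_p (unseparated p x B b : nat) = \sum_p (unseparated p x B w : nat))%N.
Proof.
move=> bB wB xB; rewrite (reindex_inj (mulgI (tperm w b))); apply: eq_bigr => p _.
have [wx bx] : w != x /\ b != x by split; apply: contraNneq xB => <-.
have tB : map (tperm w b) B =i B.
  move=> c; apply/mapP/idP => [[d dB ->]|cB]; first by case: tpermP => // ->.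
  by exists (tperm w b c); rewrite ?tpermK //; case: tpermP => // ->.
rewrite /unseparated -(eq_all_r tB) all_map; congr (nat_of_bool _).
by apply: eq_all => c /=; rewrite !permM tpermK tpermR tpermD.
Qed.

Lemma sum_unseparated_le x B w : w \in B -> x \notin B ->
  ((\sum_p (unseparated p x B w : nat)) * size (undup B) <= 2 * n`!)%N.
Proof.
move=> wB xB; rewrite mulnC.
have -> : (size (undup B) * \sum_p (unseparated p x B w : nat) =
           \sum_(b <- undup B) \sum_p (unseparated p x B b : nat))%N.
  rewrite -sum1_size big_distrl /=; apply: eq_big_seq => b; rewrite mem_undup => bB.
  by rewrite mul1n (sum_unseparated_eq bB wB xB).
rewrite exchange_big /= -card_Sn mulnC -sum_nat_const.
by apply: leq_sum => p _; rewrite -big_mkcond /= sum1_count count_unseparated.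
Qed.

End RandomRelabelling.

Lemma sum_first_occurrences (T : finType) (f : T -> nat) x0 s :
  (\sum_(j < size s) (nth x0 s j \notin take j s) * f (nth x0 s j) = \sum_(i in s) f i)%N.
Proof.
elim/last_ind: s => [|s a IH]; first by rewrite big_ord0 big_pred0.
rewrite size_rcons big_ord_recr /= nth_rcons ltnn eqxx -cats1 take_size_cat //.
rewrite (eq_bigr (fun j : 'I_(size s) =>
  (nth x0 s j \notin take j s) * f (nth x0 s j)))%N; last first.
  by move=> j _; rewrite /= nth_cat ltn_ord takel_cat // ltnW.
rewrite IH; have [aS|aS] /= := boolP (a \in s).
  by rewrite addn0; apply: eq_bigl => i; rewrite mem_cat inE orbC; case: eqP => // ->.
rewrite [RHS](bigD1 a) ?mem_cat ?inE ?eqxx ?orbT //= addnC mul1n; congr (_ + _)%N.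
apply: eq_bigl => i; rewrite mem_cat inE.
by case: eqP => [->|_]; rewrite ?(negbTE aS) ?orbF ?andbT.
Qed.

Section RelabelledRuns.
Variable n : nat.
Implicit Types (w x y : 'I_n) (V S : seq 'I_n) (p : 'S_n) (t : tree 'I_n).

Lemma visible_map p V x w :
  visible (map p V) (p x) (p w) = (w \in V) && unseparated p x (from_last w V) w.
Proof. by rewrite /visible (mem_map perm_inj) (from_last_map _ _ perm_inj) all_map. Qed.

Definition visible_count p x V :=
  (\sum_w ((w \in V) && unseparated p x (from_last w V) w : nat))%N.

Lemma card_visible_map p V x :
  #|[set y | visible (map p V) (p x) y]| = visible_count p x V.
Proof.
rewrite -sum1_card big_mkcond /= (reindex_inj (@perm_inj _ p)) /=.
by apply: eq_bigr => w _; rewrite inE visible_map; case: (_ && _).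
Qed.

Lemma MTR_sum x0 t S :
  MTR t S = (\sum_(j < size S) (depth (nth x0 S j) (mtr_run t (take j S))).+1)%N.
Proof. by elim: S t => [|a S IH] t /=; rewrite ?big_ord0 // big_ord_recl IH. Qed.

Lemma MTR_map_le x0 T S p : is_bst_on T ->
  (MTR T (map p S) <= size S
     + \sum_(j < size S) visible_count p (nth x0 S j) (since_last_access x0 S j)
     + \sum_i depth i T)%N.
Proof.
move=> BT; rewrite (MTR_sum (p x0)) size_map.
pose f i := depth (p i) T.
apply: (@leq_trans (\sum_(j < size S) (1
   + visible_count p (nth x0 S j) (since_last_access x0 S j)
   + (nth x0 S j \notin take j S) * f (nth x0 S j)))%N).
  apply: leq_sum => j _; rewrite -addnA add1n ltnS (nth_map x0) // -map_take.
  apply: leq_trans (depth_mtr_run _ _ BT) _.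
  by rewrite (after_last_map _ _ perm_inj) card_visible_map (mem_map perm_inj).
rewrite !big_split /= sum1_card card_ord leq_add2l sum_first_occurrences.
rewrite [X in (_ <= X)%N](reindex_inj (@perm_inj _ p)) big_mkcond /=.
by apply: leq_sum => i _; case: ifP.
Qed.

End RelabelledRuns.

Section WorkingSet.
Variable T : eqType.
Implicit Types (S : seq T).

Lemma rho_lt S j : (0 < j)%N -> (rho S j < j)%N.
Proof.
move=> j0; suff : (rho S j <= j.-1)%N by lia.
by apply/bigmax_leqP_seq => k; rewrite mem_index_iota => kj _; lia.
Qed.

Lemma wset_size_gt0 S j : (0 < j)%N -> (0 < wset_size S j)%N.
Proof.
move=> j0; rewrite /wset_size -has_predT; apply/hasP; exists (onth S j.-1) => //.
by rewrite mem_undup; apply: map_f; rewrite mem_index_iota; have := rho_lt S j0; lia.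
Qed.

Lemma wset_size_ge x0 S j : (j < size S)%N ->
  ((size (undup (since_last_access x0 S j))).+1 <= wset_size S j.+1)%N.
Proof.
move=> jS; rewrite /since_last_access; set x := nth x0 S j; set u := take j S.
have su : size u = j by rewrite size_takel // ltnW.
have [q [qu Eq Hq]] := after_last_drop x0 x u.
have rq : (rho S j.+1 <= q)%N.
  apply/bigmax_leqP_seq => k; rewrite mem_index_iota => /andP [k1 kj] /eqP.
  have kS : (k.-1 < size S)%N by lia.
  rewrite /= !onthE !(nth_map x0) // => -[xk].
  have : (k.-1 < q)%N by apply: Hq; rewrite ?su ?nth_take //; lia.
  lia.
have -> : (size (undup (after_last x u))).+1 = size (undup (map Some (x :: after_last x u))).
  by rewrite undup_map_inj /= ?(negbTE (after_last_notin x u)) ?size_map // => ? ? [].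
apply: uniq_leq_size (undup_uniq _) _ => o; rewrite !mem_undup => /mapP [y].
rewrite inE => /predU1P [-> ->|].
  by apply/mapP; exists j.+1; rewrite ?mem_index_iota ?onthE ?(nth_map x0) //; lia.
rewrite Eq => /(nthP x0) [i iu <-] ->; move: iu; rewrite size_drop su => iu.
apply/mapP; exists (q + i).+1; first by rewrite mem_index_iota; lia.
by rewrite /= onthE (nth_map x0) ?nth_drop ?nth_take //; lia.
Qed.
End WorkingSet.

Local Open Scope ring_scope.

Lemma ler_ln (x y : R) : 0 < x -> x <= y -> ln x <= ln y.
Proof.
move=> /RltP x0 /RleP xy; apply/RleP.
case: (Rle_lt_or_eq_dec _ _ xy) => [lt_xy|<-]; last exact: Rle_refl.
exact/Rlt_le/ln_increasing.
Qed.

Lemma ln_ge0 (x : R) : 1 <= x -> 0 <= ln x.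
Proof.
move=> x1; have -> : 0 = ln 1 by symmetry; exact: ln_1.
by apply: ler_ln.
Qed.

Lemma ln_le_log2 (x : R) : 1 <= x -> ln x <= log2 x.
Proof.
move=> x1; have lnx := ln_ge0 x1.
have ln2_gt0 : 0 < ln 2 by apply/RltP/(Rlt_trans _ _ _ _ ln_lt_2)/Rinv_0_lt_compat/Rlt_0_2.
have ln2_lt1 : ln 2 < 1.
  apply/RltP; rewrite -[X in Rlt _ X]ln_exp.
  by apply: ln_increasing; [exact: Rlt_0_2 | exact: exp_ineq1 R1_neq_R0].
by rewrite /log2 ler_pdivlMr // ler_piMr // ltW.
Qed.

Lemma ln_succ_ge k : ln k.+1%:R + k.+2%:R^-1 <= ln k.+2%:R :> R.
Proof.
set a : R := k.+1%:R; set b : R := k.+2%:R.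
have ba : b = a + 1 by rewrite /a /b -natr1.
have [a0 b0] : 0 < a /\ 0 < b by rewrite !ltr0n.
set q := a / b; set c : R := b^-1.
have h : ln q <= - c.
  rewrite -[X in _ <= X]ln_exp; apply: ler_ln; first by rewrite divr_gt0.
  have -> : q = 1 - c by rewrite /q /c ba; field; lra.
  exact/RleP/exp_ineq1_le.
have lnq : ln q = ln a - ln b.
  by rewrite /q ln_mult ?ln_Rinv //; apply/RltP; rewrite ?invr_gt0.
lra.
Qed.

Definition harmonic (K : nat) : R := \sum_(i < K) (i.+1%:R)^-1.

Lemma harmonic_le_ln K k : (K < k)%N -> harmonic K <= 1 + ln k%:R.
Proof.
have ln_k k' : (0 < k')%N -> 0 <= ln k'%:R by move=> k0; apply: ln_ge0; rewrite ler1n.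
have step K' : harmonic K'.+1 <= 1 + ln K'.+1%:R.
  elim: K' => [|K' IH].
    have ln1 : ln 1%:R = 0 := ln_1.
    by rewrite /harmonic big_ord1 ln1 invr1; lra.
  rewrite /harmonic big_ord_recr /= -/(harmonic K'.+1).
  apply: le_trans (lerD IH (lexx _)) _; rewrite -addrA lerD2l.
  exact: ln_succ_ge.
case: K => [|K] lt_Kk; first by rewrite /harmonic big_ord0; have := ln_k _ lt_Kk; lra.
by apply: le_trans (step K) _; rewrite lerD2l ler_ln // ler_nat ltnW.
Qed.

Lemma log2_ge0 (x : R) : 1 <= x -> 0 <= log2 x.
Proof. by move=> x1; apply: le_trans (ln_le_log2 x1); apply: ln_ge0. Qed.

Lemma harmonic_le_log2 K k : (K < k)%N -> harmonic K <= 1 + log2 k%:R.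
Proof.
move=> lt_Kk; apply: le_trans (harmonic_le_ln lt_Kk) _.
by apply: lerD (lexx _) (ln_le_log2 _); rewrite ler1n (leq_ltn_trans _ lt_Kk).
Qed.

Lemma WS_ge0 (T : eqType) (s : seq T) : 0 <= WS s.
Proof.
rewrite /WS big_seq; apply: sumr_ge0 => j; rewrite mem_index_iota => /andP [j0 _].
by apply: log2_ge0; rewrite ler1n wset_size_gt0.
Qed.

Section Expectation.
Variable n : nat.
Implicit Types (w x : 'I_n) (V S : seq 'I_n) (T : tree 'I_n).

Lemma sum_inv_size_from_last V :
  \sum_(w | w \in V) ((size (undup (from_last w V)))%:R)^-1 = harmonic (size (undup V)).
Proof.
elim: V => [|a V IH]; first by rewrite big_pred0 // /harmonic big_ord0.
rewrite /=; case: ifP => aV.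
  have eqV : a :: V =i V by move=> w; rewrite inE; case: eqP => // ->.
  rewrite -IH; apply: eq_big => [w|w /= wV]; first exact: eqV.
  by rewrite eqV in wV; rewrite wV.
rewrite (bigD1 a) ?mem_head //= aV /harmonic big_ord_recr /= -/(harmonic _) -IH addrC.
congr (_ + _); last by rewrite aV.
apply: eq_big => w; rewrite inE.
  by case: eqP => [->|]; rewrite ?aV ?andbT.
by case/andP=> /predU1P [->|wV]; rewrite ?eqxx // => _; rewrite wV.
Qed.

Lemma sum_visible_count_le x V : x \notin V ->
  (\sum_(p : 'S_n) visible_count p x V)%:R <= (2 * n`!)%:R * harmonic (size (undup V)).
Proof.
move=> xV; rewrite /visible_count exchange_big natr_sum -sum_inv_size_from_last mulr_sumr.
rewrite [X in _ <= X]big_mkcond /=; apply: ler_sum => w _.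
have [wV|wV] := boolP (w \in V); last by rewrite big1.
have wL := mem_from_last wV.
have xL : x \notin from_last w V by apply: contra xV; apply: from_last_sub.
have L0 : (0 < size (undup (from_last w V)))%N.
  by rewrite -has_predT; apply/hasP; exists w; rewrite ?mem_undup.
rewrite /= ler_pdivlMr ?ltr0n // -natrM ler_nat.
exact: sum_unseparated_le wL xL.
Qed.

Lemma expected_MTR_le x0 S T : is_bst_on T ->
  expected_MTR T S <= (size S + \sum_i depth i T)%N%:R
    + 2 * \sum_(j < size S) harmonic (size (undup (since_last_access x0 S j))).
Proof.
move=> BT; rewrite /expected_MTR ler_pdivrMr ?ltr0n ?fact_gt0 // mulr_sumr.
set c := (size S + \sum_i depth i T)%N.
apply: (@le_trans _ _ (\sum_(p : 'S_n)
    (c%:R + \sum_(j < size S) (visible_count p (nth x0 S j) (since_last_access x0 S j))%:R))).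
  apply: ler_sum => p _; rewrite -natr_sum -natrD ler_nat addnAC; exact: MTR_map_le.
rewrite big_split /= sumr_const card_Sn mulrDl mulr_natr.
apply: lerD; first exact: lexx.
rewrite exchange_big mulr_suml; apply: ler_sum => j _; rewrite -natr_sum.
apply: le_trans (sum_visible_count_le (after_last_notin _ _)) _.
by rewrite natrM mulrAC.
Qed.

Lemma sum_harmonic_le_WS x0 S :
  \sum_(j < size S) harmonic (size (undup (since_last_access x0 S j))) <= (size S)%:R + WS S.
Proof.
have -> : (size S)%:R + WS S = \sum_(j < size S) (1 + log2 (wset_size S j.+1)%:R).
  by rewrite big_split /= sumr_const card_ord /WS big_add1 /= big_mkord.
by apply: ler_sum => j _; apply: harmonic_le_log2 (wset_size_ge x0 (ltn_ord j)).
Qed.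
End Expectation.

Theorem mainTheorem9 :
  exists c : R, 0 < c /\
    forall (n m : nat) (S : seq 'I_n) (T : tree 'I_n),
      (1 <= n)%N -> (1 <= m)%N -> size S = m -> is_bst_on T ->
      expected_MTR T S <=
        c * (WS S + m%:R + (\sum_(i < n) depth i T)%N%:R).
Proof.
exists 3; split=> [|n m S T n1 _ <- BT]; first by lra.
pose x0 : 'I_n := Ordinal n1.
have := expected_MTR_le x0 S BT; rewrite natrD => expected_bound.
have harmonic_bound := sum_harmonic_le_WS x0 S.
have WS_nonneg := WS_ge0 S.
have depth_nonneg := ler0n R (\sum_(i < n) depth i T).
lra.
Qed.
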